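(* Let $X,Y$ be Banach spaces, let $F:X\rightrightarrows Y$ be a closed convex set-valued mapping, let $A\subset X$ be a closed convex set, let $\bar y\in Y$, put $S:=F^{-1}(\bar y)\cap A$, and let $\bar x\in S$. Suppose that the set $DF^{-1}(\bar y,\bar x)(B_Y)\cap(T(A,\bar x)+B_X)\cap B_X$ is relatively compact in $X$. Then ${\rm ssubreg}_AF(\bar x,\bar y)<+\infty$ if and only if $$DF^{-1}(\bar y,\bar x)(0)\cap T(A,\bar x)=\{0\}.$$
   Context: $B_X,B_Y$ are the closed unit balls; $B(x,\delta)$ is the open ball. $F$ closed convex means ${\rm gph}(F)=\{(x,y):y\in F(x)\}$ is closed and convex in $X\times Y$. For a closed convex set $C$ and $a\in C$, the contingent cone $T(C,a)$ is the set of $v$ for which there exist $v_n\to v$, $t_n\to0^+$ with $a+t_nv_n\in C$ for all $n$. For $(x,y)\in{\rm gph}(F)$, $DF^{-1}(y,x)(v):=\{u\in X:(u,v)\in T({\rm gph}(F),(x,y))\}$ and $DF^{-1}(y,x)(W)=\bigcup_{v\in W}DF^{-1}(y,x)(v)$ for $W\subset Y$. ${\rm ssubreg}_AF(\bar x,\bar y):=\inf\{\tau>0:\exists\delta>0$ such that $\|x-\bar x\|\le\tau(d(\bar y,F(x))+d(x,A))$ for all $x\in B(\bar x,\delta)\}$, with $\inf\emptyset=+\infty$. *)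

From HB Require Import structures.
From mathcomp Require Import all_boot all_order all_algebra.
From mathcomp Require Import all_classical all_reals all_analysis.
Unset Printing Implicit Defensive.
Import Order.TTheory GRing.Theory Num.Theory.
Import numFieldNormedType.Exports.
Local Open Scope classical_set_scope.
Local Open Scope ring_scope.

Definition convex_set_of {R : realType} {V : lmodType R} (C : set V) : Prop :=
  forall a b : V, forall t : R, C a -> C b -> 0 <= t -> t <= 1 ->
    C (t *: a + (1 - t) *: b).

Definition gph {X Y : Type} (F : X -> set Y) : set (X * Y) :=
  [set p | F p.1 p.2].

Definition inv_img {X Y : Type} (F : X -> set Y) (y : Y) : set X :=
  [set x | F x y].

Definition cball1 (R : realType) (V : normedModType R) : set V :=
  [set v | `|v| <= 1].

Definition contingent_cone {R : realType} {V : normedModType R}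
    (C : set V) (a : V) : set V :=
  [set v | exists (vn : nat -> V) (tn : nat -> R),
      vn @ \oo --> v /\ tn @ \oo --> (0 : R) /\ (forall n, 0 < tn n) /\
      (forall n, C (a + tn n *: vn n))].

Definition coderiv_inv {R : realType} {X Y : normedModType R}
    (F : X -> set Y) (y : Y) (x : X) (v : Y) : set X :=
  [set u | contingent_cone (gph F) (x, y) (u, v)].

Definition coderiv_inv_set {R : realType} {X Y : normedModType R}
    (F : X -> set Y) (y : Y) (x : X) (W : set Y) : set X :=
  [set u | exists2 v, W v & coderiv_inv F y x v u].

Definition minkowski_sum {R : realType} {V : normedModType R} (A B : set V) : set V :=
  [set z | exists a b, A a /\ B b /\ z = a + b].

(* distance d(z, C) in extended reals, +oo for empty C *)
Definition edist {R : realType} {V : normedModType R} (z : V) (C : set V) : \bar R :=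
  ereal_inf [set (`|z - c|)%:E | c in C].

(* ssubreg_A F (xb, yb) in \bar R, with inf of the empty set = +oo *)
Definition ssubreg {R : realType} {X Y : normedModType R}
    (F : X -> set Y) (A : set X) (xb : X) (yb : Y) : \bar R :=
  ereal_inf [set tau%:E | tau in
    [set tau : R | 0 < tau /\ exists2 delta : R, 0 < delta &
       forall x : X, `|x - xb| < delta ->
         ((`|x - xb|)%:E <= tau%:E * (edist yb (F x) + edist x A))%E]].

(* Necessity: given a modulus tau, convexity lets one follow a direction
   u in DF^{-1}(yb,xb)(0) /\ T(A,xb) both along gph F and inside A with one
   common small step t; the subregularity estimate at x = xb + t w then forces
   |u| to be arbitrarily small.
   Sufficiency: if the modulus k+1 fails at some x, the chords from (xb,yb) to
   a nearby point of gph F over x and from xb to a nearby point of A, scaled by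
   1/|x - xb|, are tangent by convexity; they give a unit vector u_k lying in
   DF^{-1}(yb,xb)(B_Y/(k+1)) and within 1/(k+1) of T(A,xb).  The u_k live in the
   relatively compact set of the hypothesis, so they cluster at some p <> 0,
   and p is in DF^{-1}(yb,xb)(0) /\ T(A,xb) because contingent cones are
   closed. *)

From Pilot Require Import Defs.
From HB Require Import structures.
From mathcomp Require Import all_boot all_order all_algebra.
From mathcomp Require Import all_classical all_reals all_analysis.
From mathcomp Require Import lra.
Import Order.TTheory GRing.Theory Num.Theory.
Import numFieldNormedType.Exports.
Local Open Scope classical_set_scope.
Local Open Scope ring_scope.

Section ContingentCone.
Context {R : realType} {V : normedModType R}.
Implicit Types (C : set V) (a v w : V).

Lemma contingent_coneP C a v :
  contingent_cone C a v <->
  forall e : R, 0 < e -> exists (t : R) (w : V),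
    [/\ 0 < t, t < e, `|w - v| < e & C (a + t *: w)].
Proof.
split.
  move=> [vn [tn [vn_v [tn_0 [tn_gt0 Cn]]]]] e e0.
  have /cvgrPdist_lt /(_ e e0) near_v := vn_v.
  have /cvgrPdist_lt /(_ e e0) near_0 := tn_0.
  have [n [vn_e tn_e]] := filter_ex (filterI near_v near_0).
  exists (tn n), (vn n); split => //; last by rewrite distrC.
  by move: tn_e; rewrite sub0r normrN gtr0_norm.
move=> approx.
have /choice [f f_spec] : forall n : nat, exists p : R * V,
    [/\ 0 < p.1, p.1 < n.+1%:R^-1, `|p.2 - v| < n.+1%:R^-1 & C (a + p.1 *: p.2)].
  move=> n; have [|t [w [? ? ? ?]]] := approx n.+1%:R^-1; first by rewrite invr_gt0.
  by exists (t, w).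
exists (fun n => (f n).2), (fun n => (f n).1); split; [|split; [|split]].
- apply/cvgrPdist_lt => e e0; near=> n; have [_ _ fn_v _] := f_spec n.
  rewrite distrC; apply: lt_trans fn_v _.
  near: n; exact: (near_infty_natSinv_lt (PosNum e0)).
- apply/cvgrPdist_lt => e e0; near=> n; have [fn_gt0 fn_lt _ _] := f_spec n.
  rewrite sub0r normrN gtr0_norm //; apply: lt_trans fn_lt _.
  near: n; exact: (near_infty_natSinv_lt (PosNum e0)).
- by move=> n; have [] := f_spec n.
- by move=> n; have [] := f_spec n.
Unshelve. all: by end_near.
Qed.

Lemma contingent_cone0 C a : C a -> contingent_cone C a 0.
Proof.
move=> Ca; apply/contingent_coneP => e e0; exists (e / 2), 0.
by rewrite divr_gt0 // ltr_pdivrMr // ltr_pMr // ltr1n subrr normr0 scaler0 addr0.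
Qed.

Lemma contingent_cone_closed C a : closed (contingent_cone C a).
Proof.
move=> v clv; apply/contingent_coneP => e e0.
have e20 : 0 < e / 2 by rewrite divr_gt0.
have [w [Tw vw]] := clv _ (nbhsx_ballx v _ e20).
have [t [w' [t0 te w'w Cw']]] := (contingent_coneP C a w).1 Tw _ e20.
exists t, w'; split => //.
  by apply: lt_trans te _; rewrite ltr_pdivrMr // ltr_pMr // ltr1n.
have -> : w' - v = (w' - w) + (w - v) by rewrite addrA subrK.
rewrite (splitr e); apply: le_lt_trans (ler_normD _ _) _.
by rewrite ltrD //; move: vw; rewrite -ball_normE /= distrC.
Qed.

Lemma convex_ray_shrink C a w t t' :
  convex_set_of C -> C a -> C (a + t' *: w) -> 0 < t -> t <= t' -> C (a + t *: w).
Proof.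
move=> cvx Ca Cw t0 tt'; have t'0 : 0 < t' := lt_le_trans t0 tt'.
have := cvx _ _ (t / t') Cw Ca.
rewrite scalerDr scalerBl scale1r addrAC subrKC scalerA divfK ?gt_eqF //.
apply; first by rewrite divr_ge0 ?ltW.
by rewrite ler_pdivrMr // mul1r.
Qed.

Lemma convex_contingent_cone_near {C a v} :
  convex_set_of C -> C a -> contingent_cone C a v ->
  forall e : R, 0 < e -> exists2 T : R, 0 < T &
    forall t, 0 < t -> t <= T -> exists2 w, `|w - v| < e & C (a + t *: w).
Proof.
move=> cvx Ca /contingent_coneP Tv e e0; have [T [w [T0 _ wv Cw]]] := Tv e e0.
by exists T => // t t0 tT; exists w => //; apply: convex_ray_shrink Cw t0 tT.
Qed.

Lemma convex_contingent_coneZ {C a} c s :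
  convex_set_of C -> C a -> C c -> 0 < s -> contingent_cone C a (s *: (c - a)).
Proof.
move=> cvx Ca Cc s0; apply/contingent_coneP => e e0.
pose t := Num.min (e / 2) s^-1.
have t0 : 0 < t by rewrite lt_min divr_gt0 // invr_gt0.
exists t, (s *: (c - a)); split => //; last 1 first.
- apply: (@convex_ray_shrink C a _ t s^-1 cvx Ca _ t0); last by rewrite ge_min lexx orbT.
  by rewrite scalerA mulVf ?gt_eqF // scale1r addrC subrK.
- apply: (@le_lt_trans _ _ (e / 2)); first by rewrite ge_min lexx.
  by rewrite ltr_pdivrMr // ltr_pMr // ltr1n.
- by rewrite subrr normr0.
Qed.

End ContingentCone.

Section NormedSpace.
Context {R : realType} {V : normedModType R}.

Lemma closed_approx (S : set V) v :
  closed S -> (forall e : R, 0 < e -> exists2 w, S w & `|v - w| < e) -> S v.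
Proof.
move=> clS approx; apply: clS => B /nbhs_ballP [e e0 eB].
have [w Sw vw] := approx e e0; exists w; split => //.
by apply: eB; rewrite -ball_normE.
Qed.

Lemma compact_seq_cluster {K : set V} {u : nat -> V} :
  compact K -> (forall n, K (u n)) ->
  exists p : V, forall e : R, 0 < e -> forall N,
    exists2 k, (N <= k)%N & `|u k - p| < e.
Proof.
move=> cK Ku; have Ku_oo : (u @ \oo) K by exists 0%N => // n _; apply: Ku.
have [p [_ clp]] := cK (u @ \oo) (fmap_proper_filter u _) Ku_oo.
exists p => e e0 N.
have tail : (u @ \oo) [set y | exists2 k, (N <= k)%N & y = u k].
  by exists N => // n /= Nn; exists n.
have [_ [[k Nk ->] pu]] := clp _ _ tail (nbhsx_ballx p _ e0).
by exists k => //; move: pu; rewrite -ball_normE /= distrC.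
Qed.

Lemma edist_set_ge0 (z : V) (C : set V) : (0 <= Defs.edist z C)%E.
Proof. by apply/ereal_infP => _ [c _ <-]; rewrite lee_fin. Qed.

Lemma edist_set_le (z : V) {c : V} {C : set V} : C c -> (Defs.edist z C <= (`|z - c|)%:E)%E.
Proof. by move=> Cc; apply: ereal_inf_lbound; exists c. Qed.

Lemma edist_set_lt {z : V} {C : set V} {r : R} :
  (Defs.edist z C < r%:E)%E -> exists2 c, C c & `|z - c| < r.
Proof. by move=> /ereal_inf_lt [_ [c Cc <-]]; rewrite lte_fin; exists c. Qed.

End NormedSpace.

Section Subregularity.
Context {R : realType} {X Y : normedModType R}.
Variables (F : X -> set Y) (A : set X) (xb : X) (yb : Y).

Definition subreg_bound (tau delta : R) : Prop :=
  forall x : X, `|x - xb| < delta ->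
    ((`|x - xb|)%:E <= tau%:E * (Defs.edist yb (F x) + Defs.edist x A))%E.

Definition subreg_modulus (tau : R) : Prop :=
  0 < tau /\ exists2 delta : R, 0 < delta & subreg_bound tau delta.

Lemma ssubreg_lt_pinftyP :
  (ssubreg F A xb yb < +oo)%E <-> exists tau, subreg_modulus tau.
Proof.
split; first by move=> /ereal_inf_lt [_ [tau mod_tau <-] _]; exists tau.
move=> [tau mod_tau]; apply: (@le_lt_trans _ _ tau%:E); last exact: ltey.
by apply: ereal_inf_lbound; exists tau.
Qed.

Lemma subreg_bound_dir {tau delta t : R} {w w' : X} {z : Y} :
  subreg_bound tau delta -> 0 <= tau -> 0 < t -> t * `|w| < delta ->
  F (xb + t *: w) (yb + t *: z) -> A (xb + t *: w') ->
  `|w| <= tau * (`|z| + `|w - w'|).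
Proof.
move=> bound tau0 t0 tw_delta Fw Aw'.
have dist_x : `|xb + t *: w - xb| = t * `|w|.
  by rewrite addrAC subrr add0r normrZ gtr0_norm.
have := bound (xb + t *: w); rewrite dist_x => /(_ tw_delta) le_tw.
have dF := edist_set_le yb Fw; have dA := edist_set_le (xb + t *: w) Aw'.
have := le_trans le_tw (lee_wpmul2l (tau0 : (0 <= tau%:E)%E) (leeD dF dA)).
rewrite opprD addrA subrr add0r normrN normrZ gtr0_norm //.
rewrite opprD addrACA subrr add0r -scalerBr normrZ gtr0_norm //.
by rewrite -EFinD -EFinM lee_fin -mulrDr mulrCA ler_pM2l.
Qed.

Hypotheses (cvxF : convex_set_of (gph F)) (cvxA : convex_set_of A).
Hypotheses (Fxb : F xb yb) (Axb : A xb).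

Lemma subreg_modulus_critical_eq0 {tau : R} {u : X} :
  subreg_modulus tau -> coderiv_inv F yb xb 0 u -> contingent_cone A xb u ->
  u = 0.
Proof.
move=> [tau0 [delta delta0 bound]] DFu TAu.
apply/eqP; rewrite -normr_le0; apply/ler_addgt0Pr => e e0; rewrite add0r.
(* |w| <= tau (|z| + |w - w'|) < 3 tau eps, hence |u| < (3 tau + 1) eps. *)
have c0 : 0 < 3 * tau + 1 by lra.
pose eps := e / (3 * tau + 1); have eps0 : 0 < eps by rewrite divr_gt0.
have e_eps : e = (3 * tau + 1) * eps by rewrite mulrC divfK ?gt_eqF.
have ue0 : 0 < `|u| + eps by have := normr_ge0 u; lra.
have [T1 T10 nearF] :=
  convex_contingent_cone_near cvxF (Fxb : gph F (xb, yb)) DFu _ eps0.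
have [T2 T20 nearA] := convex_contingent_cone_near cvxA Axb TAu _ eps0.
pose t := Num.min (Num.min T1 T2) (delta / (`|u| + eps)).
have t0 : 0 < t by rewrite !lt_min T10 T20 divr_gt0.
have [|[w z] wz_u Fwz] := nearF t t0; first by rewrite !ge_min lexx.
have [|w' w'_u Aw'] := nearA t t0; first by rewrite !ge_min lexx orbT.
move: wz_u; rewrite prod_normE /= gt_max subr0 => /andP[w_u z_eps].
have w_lt : `|w| < `|u| + eps.
  by have := ler_normD (w - u) u; rewrite subrK; lra.
have tw : t * `|w| < delta.
  apply: (@lt_le_trans _ _ (t * (`|u| + eps))); first by rewrite ltr_pM2l.
  by rewrite -ler_pdivlMr // !ge_min lexx orbT.
have := subreg_bound_dir bound (ltW tau0) t0 tw Fwz Aw'.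
have ww' : `|w - w'| <= `|w - u| + `|u - w'| by apply: ler_distD.
have : tau * (`|z| + `|w - w'|) <= tau * (3 * eps).
  by rewrite ler_wpM2l ?ltW //; rewrite distrC in w'_u; lra.
have := ler_distD w u 0; rewrite !subr0 distrC.
lra.
Qed.

Definition almost_critical (eps : R) (u : X) : Prop :=
  [/\ `|u| = 1, exists2 v, `|v| < eps & coderiv_inv F yb xb v u
    & exists2 w, contingent_cone A xb w & `|u - w| < eps].

Lemma almost_critical_of_violation tau x :
  0 < tau ->
  ~ ((`|x - xb|)%:E <= tau%:E * (Defs.edist yb (F x) + Defs.edist x A))%E ->
  exists u, almost_critical tau^-1 u.
Proof.
set r := `|x - xb|; set dF := Defs.edist _ _; set dA := Defs.edist _ _.
move=> tau0 viol.
have dF0 : (0 <= dF)%E := edist_set_ge0 _ _.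
have dA0 : (0 <= dA)%E := edist_set_ge0 _ _.
have r0 : 0 < r.
  rewrite lt_neqAle normr_ge0 andbT; apply/negP => /eqP r0; apply: (viol).
  by rewrite -r0; apply: mule_ge0; [rewrite lee_fin ltW | exact: adde_ge0].
have below d : (d <= dF + dA)%E -> (d < (r / tau)%:E)%E.
  move=> le_d; rewrite ltNge; apply/negP => le_r; apply: (viol).
  have -> : r%:E = (tau%:E * (r / tau)%:E)%E by rewrite -EFinM mulrC divfK ?gt_eqF.
  by apply: lee_wpmul2l; [rewrite lee_fin ltW | exact: le_trans le_r le_d].
have [c Fc yb_c] := edist_set_lt (below _ (leeDl _ dA0)).
have [a Aa x_a] := edist_set_lt (below _ (leeDr _ dF0)).
have scale_lt d : d < r / tau -> r^-1 * d < tau^-1.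
  by move=> lt_d; rewrite -(ltr_pM2l r0) mulrA mulfV ?gt_eqF // mul1r.
have ri0 : 0 < r^-1 by rewrite invr_gt0.
exists (r^-1 *: (x - xb)); split.
- by rewrite normrZ gtr0_norm // mulVf ?gt_eqF.
- exists (r^-1 *: (c - yb)); first by rewrite normrZ gtr0_norm // distrC scale_lt.
  exact: (convex_contingent_coneZ (x, c) _ cvxF (Fxb : gph F (xb, yb)) Fc ri0).
- exists (r^-1 *: (a - xb)); first exact: convex_contingent_coneZ.
  by rewrite -scalerBr opprB addrA subrK normrZ gtr0_norm // scale_lt.
Qed.

Lemma not_subreg_almost_critical :
  ~ (exists tau, subreg_modulus tau) ->
  forall k : nat, exists u, almost_critical k.+1%:R^-1 u.
Proof.
move=> no_modulus k; pose tau : R := k.+1%:R; have tau0 : 0 < tau := ltr0Sn _ _.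
have [x viol] : exists x,
    ~ ((`|x - xb|)%:E <= tau%:E * (Defs.edist yb (F x) + Defs.edist x A))%E.
  apply: contrapT => all_bound; apply: no_modulus; exists tau; split => //.
  by exists 1 => // x _; apply: contrapT => viol; apply: all_bound; exists x.
exact: almost_critical_of_violation tau0 viol.
Qed.

Lemma almost_critical_sub {eps : R} : eps <= 1 ->
  almost_critical eps `<=` coderiv_inv_set F yb xb (cball1 R Y)
    `&` minkowski_sum (contingent_cone A xb) (cball1 R X) `&` cball1 R X.
Proof.
move=> eps1 u [u1 [v v_eps DFv] [w TAw uw_eps]]; split; [split|].
- by exists v => //; rewrite /cball1 /= ltW // (lt_le_trans v_eps).
- exists w, (u - w); split => //; split; last by rewrite addrC subrK.
  by rewrite /cball1 /= ltW // (lt_le_trans uw_eps).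
- by rewrite /cball1 /= u1.
Qed.

Lemma almost_critical_limit (u : nat -> X) :
  (forall k, almost_critical k.+1%:R^-1 (u k)) ->
  compact (closure (coderiv_inv_set F yb xb (cball1 R Y)
    `&` minkowski_sum (contingent_cone A xb) (cball1 R X) `&` cball1 R X)) ->
  exists2 p, p != 0 & (coderiv_inv F yb xb 0 `&` contingent_cone A xb) p.
Proof.
move=> crit cK.
have inv_le1 k : k.+1%:R^-1 <= 1 :> R by rewrite invf_le1 ?ltr0Sn // ler1n.
have [p clp] := compact_seq_cluster cK
  (fun k => subset_closure (almost_critical_sub (inv_le1 k) _ (crit k))).
have near_p e : 0 < e -> exists2 k, `|u k - p| < e & k.+1%:R^-1 < e.
  move=> e0; have [N _ N_e] := near_infty_natSinv_lt (PosNum e0).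
  by have [k Nk ukp] := clp e e0 N; exists k => //; apply: N_e.
exists p; [|split].
- apply/eqP => p0; have [|k ukp _] := near_p (1 / 2); first by lra.
  by have [u1 _ _] := crit k; move: ukp; rewrite p0 subr0 u1; lra.
- apply: (closed_approx _ (p, 0) (contingent_cone_closed _ _)) => e e0.
  have [k ukp k_e] := near_p e e0; have [_ [v v_k DFv] _] := crit k.
  exists (u k, v) => //; rewrite prod_normE /= gt_max distrC ukp sub0r normrN.
  exact: lt_trans v_k k_e.
- apply: closed_approx (contingent_cone_closed _ _) _ => e e0.
  have [|k ukp k_e] := near_p (e / 2); first by rewrite divr_gt0.
  have [_ _ [w TAw uw]] := crit k; exists w => //.
  have := lt_trans uw k_e; have := ler_distD (u k) p w.
  by rewrite distrC in ukp; lra.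
Qed.

End Subregularity.

Theorem proposition3p2 (R : realType) (X Y : completeNormedModType R)
    (F : X -> set Y) (A : set X) (yb : Y) (xb : X) :
  closed (gph F) -> convex_set_of (gph F) ->
  closed A -> convex_set_of A ->
  (inv_img F yb `&` A) xb ->
  compact (closure (coderiv_inv_set F yb xb (cball1 R Y)
             `&` minkowski_sum (contingent_cone A xb) (cball1 R X) `&` cball1 R X)) ->
  ((ssubreg F A xb yb < +oo)%E <->
   coderiv_inv F yb xb 0 `&` contingent_cone A xb = [set 0]).
Proof.
move=> _ cvxF _ cvxA [Fxb Axb] cK; rewrite ssubreg_lt_pinftyP; split.
  move=> [tau mod_tau]; apply/seteqP; split => [u [DFu TAu] | _ ->].
    exact: (subreg_modulus_critical_eq0 F A xb yb cvxF cvxA Fxb Axb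
              mod_tau DFu TAu).
  by split; apply: contingent_cone0.
move=> trivial_cone; apply: contrapT => no_modulus.
have /choice [u crit] :=
  not_subreg_almost_critical F A xb yb cvxF cvxA Fxb Axb no_modulus.
have [p p_neq0] := almost_critical_limit F A xb yb u crit cK.
by rewrite trivial_cone => /= p0; rewrite p0 eqxx in p_neq0.
Qed.
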